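(* (Label context weakening, subsets.) In DCC, if $\Delta_1;\Gamma\vdash M:A$, the label context $\Delta_2$ is well-formed, and $\Delta_1\subseteq\Delta_2$, then $\Delta_2;\Gamma\vdash M:A$.
   Context: DCC: expressions $x\mid U_i\mid\Pi x{:}A.B\mid L@M\mid\ell_i\{\overline M\}$ with label names $\ell_i$ and lists $\overline M$; type contexts $\Gamma::=\cdot\mid\Gamma,x{:}A$; label contexts $\Delta::=\cdot\mid\Delta,\ell_i(\{\overline x{:}\overline A\},x{:}A\mapsto M:B)$. Reduction: $\Delta\vdash\ell\{\overline M\}@N\triangleright L[\overline M/\overline x,N/x]$ when $\ell(\{\overline x{:}\overline A\},x{:}A\mapsto L:B)\in\Delta$; substitution standard with $\ell\{\overline M\}[N/x]=\ell\{\overline{M[N/x]}\}$. Equivalence $\Delta\vdash M\equiv N$: common reduct, or $\Delta\vdash L\triangleright^*\ell\{\overline N\}$, $\Delta\vdash M\triangleright^*M'$, $\ell(\{\overline x{:}\overline A\},x{:}A\mapsto N:B)\in\Delta$, $\Delta\vdash N[\overline N/\overline x]\equiv M'@x$ give $\Delta\vdash L\equiv M$, and symmetrically. Typing $\Delta;\Gamma\vdash M:A$ and formation $\vdash\Delta;\Gamma$ (mutual): variables from a well-formed context, $U_i:U_{i+1}$, $\Pi x{:}A.B:U_{\max(i,j)}$, $M@N:B[N/x]$ when $M:\Pi x{:}A.B$ and $N:A$, conversion along $\equiv$, and: if $\vdash\Delta;\Gamma$, $\ell(\{\overline x{:}\overline A\},x{:}A\mapsto M:B)\in\Delta$, $|\overline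 M|=|\overline x|$ and $\Delta;\Gamma\vdash M_k:A_k[M_1/x_1,\dots,M_{k-1}/x_{k-1}]$ for all $k$, then $\Delta;\Gamma\vdash\ell\{\overline M\}:\Pi x{:}A[\overline M/\overline x].B[\overline M/\overline x]$. Formation: $\vdash\cdot;\cdot$; fresh label entries may be added when $\Delta;\overline x{:}\overline A\vdash\Pi x{:}A.B:U_i$ and $\Delta;\overline x{:}\overline A,x{:}A\vdash M:B$; $\vdash\Delta;\Gamma,\Delta;\Gamma\vdash A:U_i\Rightarrow\vdash\Delta;\Gamma,x{:}A$. For well-formed label contexts, $\Delta_1\subseteq\Delta_2$ means every entry $\ell_i(\{\overline x{:}\overline A\},x{:}A\mapsto N:B)$ of $\Delta_1$ is also an entry of $\Delta_2$. *)

From Stdlib Require Import List Arith.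
Import ListNotations.

(* Terms: Var n (de Bruijn index), U i, Pi A B (B under one binder),
   App M N  (= M @ N),  Lab l Ms  (= l{Ms}). *)
Inductive term : Type :=
| Var : nat -> term
| U : nat -> term
| Pi : term -> term -> term
| App : term -> term -> term
| Lab : nat -> list term -> term.

Definition up_ren (xi : nat -> nat) : nat -> nat :=
  fun k => match k with 0 => 0 | S k' => S (xi k') end.

Fixpoint ren (xi : nat -> nat) (t : term) : term :=
  match t with
  | Var n => Var (xi n)
  | U i => U i
  | Pi A B => Pi (ren xi A) (ren (up_ren xi) B)
  | App M N => App (ren xi M) (ren xi N)
  | Lab l Ms => Lab l (map (ren xi) Ms)
  end.

Definition up (sigma : nat -> term) : nat -> term :=
  fun k => match k with 0 => Var 0 | S k' => ren S (sigma k') end.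

Fixpoint subst (sigma : nat -> term) (t : term) : term :=
  match t with
  | Var n => sigma n
  | U i => U i
  | Pi A B => Pi (subst sigma A) (subst (up sigma) B)
  | App M N => App (subst sigma M) (subst sigma N)
  | Lab l Ms => Lab l (map (subst sigma) Ms)
  end.

Definition scons (N : term) (sigma : nat -> term) : nat -> term :=
  fun k => match k with 0 => N | S k' => sigma k' end.

(* [Ms/xs] for Ms = [M_1; ...; M_n] written in telescope order:
   index 0 is x_n, index n-1 is x_1; indices >= n are shifted down by n. *)
Definition subst_list (Ms : list term) : nat -> term :=
  fun k => match nth_error (rev Ms) k with
           | Some M => M
           | None => Var (k - length Ms)
           end.

(* Label context entry  l({xs:As}, x:A |-> M : B):
   As = [A_1;...;A_n] is a telescope (A_k under k-1 binders),
   A is under n binders, M and B under n+1 binders (index 0 = x). *)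
Record lentry : Type := mkL {
  lname : nat;
  largs : list term;
  ldom : term;
  lbody : term;
  lcod : term }.

Definition lctx := list lentry.   (* head = most recently added *)
Definition ctx := list term.      (* head = most recently added  *)

Inductive step (D : lctx) : term -> term -> Prop :=
| st_beta : forall l As A L B Ms N,
    In (mkL l As A L B) D ->
    step D (App (Lab l Ms) N) (subst (scons N (subst_list Ms)) L)
| st_pi1 : forall A A' B, step D A A' -> step D (Pi A B) (Pi A' B)
| st_pi2 : forall A B B', step D B B' -> step D (Pi A B) (Pi A B')
| st_app1 : forall M M' N, step D M M' -> step D (App M N) (App M' N)
| st_app2 : forall M N N', step D N N' -> step D (App M N) (App M N')
| st_lab : forall l pre M M' post, step D M M' ->
    step D (Lab l (pre ++ M :: post)) (Lab l (pre ++ M' :: post)).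

Inductive steps (D : lctx) : term -> term -> Prop :=
| steps_refl : forall M, steps D M M
| steps_trans : forall M N L, step D M N -> steps D N L -> steps D M L.

Inductive equiv (D : lctx) : term -> term -> Prop :=
| eq_red : forall M N L, steps D M L -> steps D N L -> equiv D M N
| eq_eta1 : forall L M M' l Ns As A N B,
    steps D L (Lab l Ns) -> steps D M M' ->
    In (mkL l As A N B) D ->
    equiv D (subst (up (subst_list Ns)) N) (App (ren S M') (Var 0)) ->
    equiv D L M
| eq_eta2 : forall L M M' l Ns As A N B,
    steps D L (Lab l Ns) -> steps D M M' ->
    In (mkL l As A N B) D ->
    equiv D (App (ren S M') (Var 0)) (subst (up (subst_list Ns)) N) ->
    equiv D M L.

Definition lfresh (l : nat) (D : lctx) : Prop :=
  forall e, In e D -> lname e <> l.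

Inductive typ : lctx -> ctx -> term -> term -> Prop :=
| t_var : forall D G x A,
    wf D G -> nth_error G x = Some A ->
    typ D G (Var x) (ren (fun k => k + S x) A)
| t_U : forall D G i, wf D G -> typ D G (U i) (U (S i))
| t_pi : forall D G A B i j,
    typ D G A (U i) -> typ D (A :: G) B (U j) ->
    typ D G (Pi A B) (U (Nat.max i j))
| t_app : forall D G M N A B,
    typ D G M (Pi A B) -> typ D G N A ->
    typ D G (App M N) (subst (scons N Var) B)
| t_conv : forall D G M A B i,
    typ D G M A -> typ D G B (U i) -> equiv D A B -> typ D G M B
| t_lab : forall D G l As A L B Ms,
    wf D G -> In (mkL l As A L B) D ->
    length Ms = length As ->
    (forall k, k < length Ms ->
       typ D G (nth k Ms (Var 0))
               (subst (subst_list (firstn k Ms)) (nth k As (Var 0)))) ->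
    typ D G (Lab l Ms)
        (Pi (subst (subst_list Ms) A) (subst (up (subst_list Ms)) B))
with wf : lctx -> ctx -> Prop :=
| wf_nil : wf [] []
| wf_lab : forall D l As A M B i,
    typ D (rev As) (Pi A B) (U i) ->
    typ D (A :: rev As) M B ->
    lfresh l D ->
    wf (mkL l As A M B :: D) []
| wf_cons : forall D G A i,
    wf D G -> typ D G A (U i) -> wf D (A :: G).

Definition wf_lctx (D : lctx) : Prop := wf D [].

Definition lsubset (D1 D2 : lctx) : Prop := forall e, In e D1 -> In e D2.

From Stdlib Require Import List.

(* Reduction and equivalence only ever consult label entries by membership,
   so they are monotone in the label context.  For typing, the derivation is
   rebuilt rule by rule in the larger context; the only rules that are not
   structural are those deriving [wf D []], and there the conclusion
   [wf D2 []] is exactly the assumption that [D2] is well formed. *)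

Lemma step_lsubset D1 D2 M N : lsubset D1 D2 -> step D1 M N -> step D2 M N.
Proof.
  intros Hsub Hstep; induction Hstep; try (constructor; assumption).
  eapply st_beta; apply Hsub; eassumption.
Qed.

Lemma steps_lsubset D1 D2 M N : lsubset D1 D2 -> steps D1 M N -> steps D2 M N.
Proof.
  intros Hsub Hsteps; induction Hsteps.
  - apply steps_refl.
  - eapply steps_trans; [eapply step_lsubset|]; eassumption.
Qed.

Lemma equiv_lsubset D1 D2 M N : lsubset D1 D2 -> equiv D1 M N -> equiv D2 M N.
Proof.
  intros Hsub Heq; induction Heq.
  - eapply eq_red; eapply steps_lsubset; eassumption.
  - eapply eq_eta1; eauto using steps_lsubset.
  - eapply eq_eta2; eauto using steps_lsubset.
Qed.

Scheme typ_mut_ind := Induction for typ Sort Prop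
with wf_mut_ind := Induction for wf Sort Prop.
Combined Scheme typ_wf_mut_ind from typ_mut_ind, wf_mut_ind.

Section LabelWeakening.

Variable D2 : lctx.
Hypothesis wf_D2 : wf_lctx D2.

Lemma typ_wf_lsubset :
  (forall D1 G M A, typ D1 G M A -> lsubset D1 D2 -> typ D2 G M A) /\
  (forall D1 G, wf D1 G -> lsubset D1 D2 -> wf D2 G).
Proof.
  apply typ_wf_mut_ind; intros.
  all: try exact wf_D2.
  - apply t_var; auto.
  - apply t_U; auto.
  - apply t_pi; auto.
  - apply t_app with A; auto.
  - apply t_conv with A i; auto.
    eapply equiv_lsubset; eassumption.
  - apply t_lab with As L; auto.
  - apply wf_cons with i; auto.
Qed.

End LabelWeakening.

Theorem lemma3p8 : forall (D1 D2 : lctx) (G : ctx) (M A : term),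
  typ D1 G M A -> wf_lctx D2 -> lsubset D1 D2 -> typ D2 G M A.
Proof.
  intros D1 D2 G M A Htyp Hwf Hsub.
  exact (proj1 (typ_wf_lsubset D2 Hwf) D1 G M A Htyp Hsub).
Qed.
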